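(* Let $T$ be an expanding Markov map with a finite partition. For every $\kappa>0$ and every $x\in[0,1]$, $\mathcal U^\kappa(x)\setminus\{Tx\}\subset\mathcal U^\kappa(Tx)$.
   Context: An expanding Markov map with a finite partition is a map $T:[0,1]\to[0,1]$ for which there are points $0=a_0<\dots<a_Q=1$, with $I(i)=(a_i,a_{i+1})$, such that: (1) there are $n_0\in\mathbb N$, $\rho>1$ with $|(T^{n_0})'|\ge\rho$; (2) $T$ is strictly monotonic on each $I(i)$ and extends to a $C^2$ function on each $\overline{I(i)}$; (3) if $I(j)\cap T(I(k))\ne\emptyset$ then $I(j)\subset T(I(k))$; (4) there is $R$ with $I(j)\subset\bigcup_{n=1}^RT^n(I(k))$ for all $j,k$; (5) for every $k$, $\sup_{(x,y,z)\in I(k)^3}|T''(x)|/(|T'(y)||T'(z)|)<\infty$. For $\kappa>0$, $\mathcal U^\kappa(x)=\bigcup_{i\ge1}\bigcap_{N\ge i}\bigcup_{n=1}^NB(T^nx,N^{-\kappa})$, where $B(z,r)$ is the open ball of center $z$ and radius $r$. *)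

From Stdlib Require Import Reals.
From Coquelicot Require Import Coquelicot.
Open Scope R_scope.

Definition iterT (T : R -> R) (n : nat) (x : R) : R := Nat.iter n T x.

Definition Iint (a : nat -> R) (i : nat) (y : R) : Prop := a i < y < a (S i).

Definition in_image_iter (T : R -> R) (n : nat) (A : R -> Prop) (y : R) : Prop :=
  exists z, A z /\ iterT T n z = y.

(** g is C^2 on all of R (a C^2 function on a compact interval extends to one) *)
Definition C2_on_R (g : R -> R) : Prop :=
  forall x, ex_derive g x /\ ex_derive (Derive g) x /\
            continuous (Derive_n g 2) x.

Definition expanding_markov (T : R -> R) : Prop :=
  (forall x, 0 <= x <= 1 -> 0 <= T x <= 1) /\
  exists (Q : nat) (a : nat -> R),
    (0 < Q)%nat /\ a O = 0 /\ a Q = 1 /\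
    (forall i, (i < Q)%nat -> a i < a (S i)) /\
    (* (1) expansion of T^{n0} wherever T^{n0} is defined by the branches *)
    (exists (n0 : nat) (rho : R), (1 <= n0)%nat /\ 1 < rho /\
       forall x, (forall k, (k < n0)%nat ->
                    exists i, (i < Q)%nat /\ Iint a i (iterT T k x)) ->
         ex_derive (iterT T n0) x /\ rho <= Rabs (Derive (iterT T n0) x)) /\
    (forall i, (i < Q)%nat ->
       ((forall x y, Iint a i x -> Iint a i y -> x < y -> T x < T y) \/
        (forall x y, Iint a i x -> Iint a i y -> x < y -> T y < T x)) /\
       exists g : R -> R, C2_on_R g /\
         forall x, Iint a i x -> T x = g x) /\
    (forall j k, (j < Q)%nat -> (k < Q)%nat ->
       (exists y, Iint a j y /\ in_image_iter T 1 (Iint a k) y) ->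
       forall y, Iint a j y -> in_image_iter T 1 (Iint a k) y) /\
    (exists Rn : nat, forall j k, (j < Q)%nat -> (k < Q)%nat ->
       forall y, Iint a j y ->
         exists n, (1 <= n)%nat /\ (n <= Rn)%nat /\ in_image_iter T n (Iint a k) y) /\
    (forall k, (k < Q)%nat -> exists M : R,
       forall x y z, Iint a k x -> Iint a k y -> Iint a k z ->
         Rabs (Derive_n T 2 x) <= M * (Rabs (Derive T y) * Rabs (Derive T z))).

Definition Ukappa (T : R -> R) (kappa : R) (x : R) (y : R) : Prop :=
  exists i : nat, (1 <= i)%nat /\
    forall N : nat, (i <= N)%nat ->
      exists n : nat, (1 <= n)%nat /\ (n <= N)%nat /\
        Rabs (y - iterT T n x) < Rpower (INR N) (- kappa).

(* If y is in U^kappa(x),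
   then for every large N some T^n x with 1 <= n <= N lies within N^-kappa of y.
   Since y <> Tx and N^-kappa -> 0, eventually n = 1 cannot be that index, so
   n >= 2, and T^n x = T^(n-1)(Tx) with 1 <= n-1 <= N is the point needed
   for Tx. *)

From Stdlib Require Import Reals Lra Lia.
From Coquelicot Require Import Coquelicot.
Open Scope R_scope.

Lemma iterT_succ_r (T : R -> R) (n : nat) (x : R) :
  iterT T n (T x) = iterT T (S n) x.
Proof. symmetry; apply Nat.iter_succ_r. Qed.

Lemma Rpower_opp_lt (kappa d t : R) :
  0 < kappa -> 0 < d -> Rpower d (- / kappa) < t -> Rpower t (- kappa) < d.
Proof.
  intros Hk Hd Ht.
  set (b := Rpower d (- / kappa)) in Ht.
  assert (Hb : 0 < b) by apply exp_pos.
  assert (Hbk : Rpower b kappa = / d).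
  { unfold b; rewrite Rpower_mult.
    replace (- / kappa * kappa) with (- (1)) by (field; lra).
    now rewrite Rpower_Ropp, Rpower_1. }
  assert (Hlt : / d < Rpower t kappa).
  { rewrite <- Hbk; apply Rlt_Rpower_l; lra. }
  rewrite Rpower_Ropp, <- (Rinv_inv d).
  apply Rinv_lt_contravar; [|exact Hlt].
  pose proof (Rinv_0_lt_compat d Hd).
  apply Rmult_lt_0_compat; lra.
Qed.

Lemma Rpower_INR_opp_lt_eventually (kappa d : R) : 0 < kappa -> 0 < d ->
  exists N0 : nat, forall N, (N0 <= N)%nat -> Rpower (INR N) (- kappa) < d.
Proof.
  intros Hk Hd.
  destruct (INR_archimed 1 (Rpower d (- / kappa)) Rlt_0_1) as [N0 HN0].
  exists N0; intros N HN.
  apply Rpower_opp_lt; auto.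
  apply Rlt_le_trans with (INR N0); [lra | now apply le_INR].
Qed.

Lemma Ukappa_shift (T : R -> R) (kappa x y : R) :
  0 < kappa -> Ukappa T kappa x y -> y <> T x -> Ukappa T kappa (T x) y.
Proof.
  intros Hk [i [Hi HU]] Hne.
  assert (Hd : 0 < Rabs (y - T x)) by (apply Rabs_pos_lt; lra).
  destruct (Rpower_INR_opp_lt_eventually kappa _ Hk Hd) as [N0 Hsmall].
  exists (Nat.max i N0); split; [lia|].
  intros N HN.
  destruct (HU N ltac:(lia)) as [[|[|n]] [Hn1 [HnN Hb]]]; [lia | |].
  - pose proof (Hsmall N ltac:(lia)).
    unfold iterT in Hb; simpl in Hb; lra.
  - exists (S n); repeat split; [lia | lia |].
    now rewrite iterT_succ_r.
Qed.

Theorem lemma2p1 (T : R -> R) (HT : expanding_markov T) (kappa : R) (x : R) :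
  0 < kappa -> 0 <= x <= 1 ->
  forall y : R, 0 <= y <= 1 -> Ukappa T kappa x y -> y <> T x -> Ukappa T kappa (T x) y.
Proof.
  intros Hk _ y _ HU Hne.
  exact (Ukappa_shift T kappa x y Hk HU Hne).
Qed.
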